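(* Let $K=(\mathbb{V},U,\mathbb{F},\succ)$ be a circuit. Let $A=(\mathbb{V}_A,U,\mathbb{F}_A,\succ)$ be an $\eta$-faithful interpretation of $K$ through an alignment $\pi$, and let $A^\star=(\mathbb{V}_A^\star,U,\mathbb{F}_A^\star,\succ)$ be an $\eta$-faithful interpretation of $A$ through an alignment $\pi^\star$. Then $A^\star$ is a $2\eta$-faithful interpretation of $K$ through the alignment $\pi^\star\circ\pi$.
   Context: A deterministic causal model is $(\mathbb{V},U,\mathbb{F},\succ)$ with hidden variables $\mathbb{V}$, input $U$, functions $\mathbb{F}$, partial order $\succ$, and $v_k:=f_k(\mathrm{Pa}(v_k),U)$ with $\mathrm{Pa}(v_k)\subseteq\{v:v\succ v_k\}$; $v^{\mathbb{F}}$ denotes the solution of variable $v$ as a function of the input. Interventions $\mathrm{do}(v_k\leftarrow\tilde f)$ replace $v_k$'s equation; $\mathcal{I}(\mathbb{V})$ is the set of interventions. $K'=(\tilde{\mathbb{V}},\tilde U,\tilde{\mathbb{F}},\cdot)$ abstracts $K$ through an alignment $\pi$ if $\pi:\mathrm{SubsetsOf}(\mathbb{V})\to\tilde{\mathbb{V}}$ is surjective, $\tilde v_k=\pi\big(\bigcup_{v_k\in\pi^{-1}(\tilde v_k)}f_k(\mathrm{Pa}(v_k),U)\big)$ for all $\tilde v_k$, and there is a surjection $\omega:\mathcal{I}(\mathbb{V})\to\mathcal{I}(\tilde{\mathbb{V}})$ with $\pi(\mathrm{do}(v_k\leftarrow f))=\mathrm{do}(\pi(v_k)\leftarrow\omega(f))$.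 The composition $\pi^\star\circ\pi$ means applying $\pi$ then $\pi^\star$. A circuit of a language model $h:\Sigma^*\to\mathbb{R}^{|\Sigma|}$ on a task $S\subseteq\Sigma^*$ is a causal model with $S$-valued input, real-vector hidden variables and a terminal output variable $v_{\mathrm{out}}$ with $v_{\mathrm{out}}^{\mathbb{F}}=h$ on $S$. A causal model $A$ that abstracts a causal model $K$ (having an output variable $v_{\mathrm{out}}$) is an $\eta$-faithful interpretation of $K$ if $A$ has an output variable $v^\star_{\mathrm{out}}$ with $\|v^{\star}_{\mathrm{out}}-v_{\mathrm{out}}\|<\eta$ on $S$. *)

From HB Require Import structures.
From mathcomp Require Import all_boot all_order all_algebra.
From mathcomp Require Import all_classical all_reals normedtype.
Unset Printing Implicit Defensive.
Import Order.TTheory GRing.Theory Num.Theory.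
Import numFieldNormedType.Exports.
Local Open Scope ring_scope.

(* Deterministic causal models (V, U, F, >-) with a designated output var.   *)
(*   [before M p k] reads  p >- k  : p may be a parent of k.                 *)
(*   A mechanism for k receives the values of all variables p >- k (so       *)
(*   Pa(k) is automatically a subset of {p | p >- k}) and the input u.       *)
Record cmodel (U W : Type) := CModel {
  var : eqType;
  Val : var -> Type;
  before : var -> var -> Prop;
  before_trans : forall a b c, before a b -> before b c -> before a c;
  before_wf : well_founded before;
  mech_of : forall k, (forall p, before p k -> Val p) -> U -> Val k;
  out : var;
  out_eq : Val out = W
}.
Arguments var {U W} c : rename.
Arguments Val {U W} c _ : rename.
Arguments before {U W} c _ _ : rename.
Arguments before_wf {U W} c : rename.
Arguments mech_of {U W} c k _ _ : rename.
Arguments out {U W} c : rename.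
Arguments out_eq {U W} c : rename.

Section CausalModels.
Variables (U W : Type).

Definition mechT (M : cmodel U W) (k : var M) : Type :=
  (forall p, before M p k -> Val M p) -> U -> Val M k.

Definition solve (M : cmodel U W) (m : forall k, mechT M k) (u : U)
  : forall v : var M, Val M v :=
  Fix (before_wf M) (Val M) (fun k rec => m k rec u).
Arguments solve M m u v : clear implicits.

Definition sol (M : cmodel U W) (u : U) : forall v, Val M v :=
  solve M (mech_of M) u.

Definition do_mechs (M : cmodel U W) (k : var M) (g : mechT M k)
  : forall v, mechT M v :=
  fun v => match @eqP _ k v with
           | ReflectT e => eq_rect k (mechT M) g v e
           | ReflectF _ => mech_of M v
           end.

Definition sol_do (M : cmodel U W) (k : var M) (g : mechT M k) (u : U)
  : forall v, Val M v :=
  solve M (do_mechs M k g) u.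

Definition out_val (M : cmodel U W) (x : Val M (out M)) : W :=
  eq_rect _ (fun T : Type => T) x _ (out_eq M).

(* Alignments: a (surjectivity is required in [abstracts]) map from the       *)
(* variables of K to those of A, whose fibres pi^{-1}(a) are the groups of    *)
(* low-level variables, together with the value-level map sending the values *)
(* of the group pi^{-1}(a) to a value of a.                                   *)
Record alignment (K A : cmodel U W) := Alignment {
  amap : var K -> var A;
  avals : forall a : var A,
      (forall v : {v : var K | amap v = a}, Val K (proj1_sig v)) -> Val A a
}.

Definition abstracts (K A : cmodel U W) (pi : alignment K A) : Prop :=
  (forall a : var A, exists v : var K, amap K A pi v = a)
  /\ (forall (u : U) (a : var A),
        sol A u a = avals K A pi a (fun v => sol K u (proj1_sig v)))
  /\ exists om : forall k : var K, mechT K k -> mechT A (amap K A pi k),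
       (* omega : I(V) -> I(V~) is surjective *)
       (forall (a : var A) (g : mechT A a), exists (k : var K) (f : mechT K k),
           existT (mechT A) (amap K A pi k) (om k f) = existT (mechT A) a g)
       (* pi(do(v_k <- f)) = do(pi(v_k) <- omega(f)) *)
       /\ (forall (k : var K) (f : mechT K k) (u : U) (a : var A),
             sol_do A (amap K A pi k) (om k f) u a
             = avals K A pi a (fun v => sol_do K k f u (proj1_sig v))).

Definition comp_fib (K A B : cmodel U W) (pi : alignment K A)
  (pis : alignment A B) (b : var B)
  (a : {a : var A | amap A B pis a = b})
  (v : {v : var K | amap K A pi v = proj1_sig a})
  : {v : var K | amap A B pis (amap K A pi v) = b} :=
  exist _ (proj1_sig v)
    (eq_trans (f_equal (amap A B pis) (proj2_sig v)) (proj2_sig a)).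

Definition comp_alignment (K A B : cmodel U W) (pi : alignment K A)
  (pis : alignment A B) : alignment K B :=
  Alignment K B (fun v => amap A B pis (amap K A pi v))
    (fun b x => avals A B pis b (fun a =>
        avals K A pi (proj1_sig a)
          (fun v => x (comp_fib K A B pi pis b a v)))).

End CausalModels.
Arguments amap {U W K A} a _ : rename.
Arguments avals {U W K A} a b _ : rename.
Arguments Alignment {U W} K A _ _.
Arguments alignment {U W} K A.
Arguments mechT {U W} M k.
Arguments solve {U W} M m u v.
Arguments sol {U W} M u v.
Arguments do_mechs {U W} M k g v.
Arguments sol_do {U W} M k g u v.
Arguments out_val {U W} M x.
Arguments abstracts {U W} K A pi.
Arguments comp_fib {U W K A B} pi pis b a v.
Arguments comp_alignment {U W K A B} pi pis.

Section Interp.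
Variables (R : realType) (Sigma : finType) (S : pred (seq Sigma)).

Definition task_input : Type := {x : seq Sigma | S x}.
Definition outT : Type := 'rV[R]_#|Sigma|.

Definition is_circuit (h : seq Sigma -> outT) (K : cmodel task_input outT)
  : Prop :=
  (forall v : var K, exists n : nat, Val K v = 'rV[R]_n)
  /\ (forall w : var K, ~ before K (out K) w)
  /\ (forall u : task_input, out_val K (sol K u (out K)) = h (proj1_sig u)).

Definition faithful_interp (K A : cmodel task_input outT)
  (pi : alignment K A) (eta : R) : Prop :=
  abstracts K A pi /\
  forall u : task_input,
    `| out_val A (sol A u (out A)) - out_val K (sol K u (out K)) | < eta.

End Interp.
Arguments is_circuit {R Sigma S} h K.
Arguments faithful_interp {R Sigma S} K A pi eta.

From HB Require Import structures.
From mathcomp Require Import all_boot all_order all_algebra.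
From mathcomp Require Import all_classical all_reals normedtype.
Import Order.TTheory GRing.Theory Num.Theory.
Local Open Scope ring_scope.

(* Abstraction is transitive: surjectivity of the variable maps and of the
   intervention maps compose, and the solution of each model (plain or
   intervened) is the image of the one below it, so the top solution is the
   image of the bottom one under the composite alignment.  Faithfulness
   errors then add up by the triangle inequality. *)

Section AbstractionComposition.
Variables (U W : Type) (K A B : cmodel U W).
Variables (pi : alignment K A) (pis : alignment A B).

Definition aligned {M N : cmodel U W} (al : alignment M N)
  (x : forall v, Val M v) (y : forall a, Val N a) : Prop :=
  forall a, y a = avals al a (fun v => x (proj1_sig v)).

Lemma aligned_comp x y z :
  aligned pi x y -> aligned pis y z -> aligned (comp_alignment pi pis) x z.
Proof.
move=> xy yz b; rewrite yz /=; congr (avals pis b _).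
by apply: functional_extensionality_dep => a; rewrite xy.
Qed.

Lemma amap_comp_surj :
  (forall a, exists v, amap pi v = a) -> (forall b, exists a, amap pis a = b) ->
  forall b, exists v, amap (comp_alignment pi pis) v = b.
Proof.
move=> pi_surj pis_surj b.
have [a <-] := pis_surj b; have [v <-] := pi_surj a.
by exists v.
Qed.

Lemma intervention_comp_surj
  (om : forall k, mechT K k -> mechT A (amap pi k))
  (oms : forall a, mechT A a -> mechT B (amap pis a)) :
  (forall a g, exists k f,
      existT (mechT A) (amap pi k) (om k f) = existT (mechT A) a g) ->
  (forall b g, exists a f,
      existT (mechT B) (amap pis a) (oms a f) = existT (mechT B) b g) ->
  forall b g, exists k f,
    existT (mechT B) (amap pis (amap pi k)) (oms (amap pi k) (om k f))
    = existT (mechT B) b g.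
Proof.
move=> om_surj oms_surj b g.
have [a [ga <-]] := oms_surj b g; have [k [f Ekf]] := om_surj a ga.
exists k, f.
by rewrite (f_equal (fun s : sigT (mechT A) =>
  existT (mechT B) (amap pis (projT1 s)) (oms (projT1 s) (projT2 s))) Ekf).
Qed.

Lemma abstracts_comp :
  abstracts K A pi -> abstracts A B pis ->
  abstracts K B (comp_alignment pi pis).
Proof.
move=> [pi_surj [sol_pi [om [om_surj do_pi]]]].
move=> [pis_surj [sol_pis [oms [oms_surj do_pis]]]].
split; first exact: amap_comp_surj.
split.
  by move=> u; apply: aligned_comp; [exact: sol_pi | exact: sol_pis].
exists (fun k f => oms (amap pi k) (om k f)); split.
  exact: intervention_comp_surj.
move=> k f u; apply: aligned_comp; [exact: do_pi | exact: do_pis].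
Qed.

End AbstractionComposition.

Lemma faithful_interp_comp (R : realType) (Sigma : finType)
  (S : pred (seq Sigma)) (K A B : cmodel (task_input Sigma S) (outT R Sigma))
  (pi : alignment K A) (pis : alignment A B) (eta eta' : R) :
  faithful_interp K A pi eta -> faithful_interp A B pis eta' ->
  faithful_interp K B (comp_alignment pi pis) (eta + eta').
Proof.
move=> [abs_pi near_pi] [abs_pis near_pis]; split.
  exact: abstracts_comp.
move=> u; rewrite [eta + _]addrC.
exact: le_lt_trans (ler_distD _ _ _) (ltrD (near_pis u) (near_pi u)).
Qed.

Theorem propositionF3 (R : realType) (Sigma : finType) (S : pred (seq Sigma))
  (h : seq Sigma -> outT R Sigma)
  (K A As : cmodel (task_input Sigma S) (outT R Sigma))
  (pi : alignment K A) (pis : alignment A As) (eta : R) :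
  is_circuit h K ->
  faithful_interp K A pi eta ->
  faithful_interp A As pis eta ->
  faithful_interp K As (comp_alignment pi pis) (2 * eta).
Proof.
move=> _ faithful_pi faithful_pis.
rewrite mulr_natl mulr2n.
exact: faithful_interp_comp.
Qed.
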